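(* The functor $CC:\mathcal{ESP}\to\mathcal{ESP}$ preserves pullbacks.
   Context: $\mathcal{ESP}$ is the category of event structures with polarities (esps) and total maps: an event structure $(E,\le,\mathrm{Con})$ has a partial order with finite down-sets $[e]$ and a consistency relation of finite sets (closed under subsets, containing singletons, closed under adding causes); configurations are finite consistent down-closed sets; a map is a polarity-preserving function sending configurations to configurations and injective on each configuration. $A^\perp$ reverses polarities, $A\parallel B$ is the disjoint union $\{1\}\times A\cup\{2\}\times B$. For an esp $A$, $CC_A$ has the events of $A^\perp\parallel A$ with their polarities; for $c=(i,a)$ let $\bar c=(3-i,a)$; the causal order of $CC_A$ is the transitive closure of $\le_{A^\perp\parallel A}\cup\{(\bar c,c)\mid c\text{ positive in }A^\perp\parallel A\}$, and a finite set is consistent iff its down-closure is consistent in $A^\perp\parallel A$. For a map $f:A\to B$, $CC_f:CC_A\to CC_B$ sends $(i,a)$ to $(i,f(a))$; this defines a functor $CC$. *)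

From Stdlib Require Import Relations List.
Set Implicit Arguments.

Definition Finite (E : Type) (X : E -> Prop) : Prop :=
  exists s : list E, forall x, X x <-> In x s.

(* Raw data of an event structure with polarities: events, polarity
   (true = positive, false = negative), causal order, consistency. *)
Record pre_esp := PreEsp {
  ev  : Type;
  pol : ev -> bool;
  leq : ev -> ev -> Prop;
  con : (ev -> Prop) -> Prop }.

Record esp_axioms (A : pre_esp) : Prop := {
  le_refl    : forall e, leq A e e;
  le_antisym : forall e e', leq A e e' -> leq A e' e -> e = e';
  le_trans   : forall e e' e'', leq A e e' -> leq A e' e'' -> leq A e e'';
  down_fin   : forall e, Finite (fun e' => leq A e' e);
  con_fin    : forall X, con A X -> Finite X;
  con_empty  : con A (fun _ => False);
  con_single : forall e, con A (fun x => x = e);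
  con_sub    : forall X Y, con A X -> (forall x, Y x -> X x) -> con A Y;
  con_cause  : forall X e e', con A X -> X e -> leq A e' e ->
                 con A (fun x => X x \/ x = e') }.

Record esp := Esp { esp_pre :> pre_esp; esp_ax : esp_axioms esp_pre }.

Definition config (A : pre_esp) (x : ev A -> Prop) : Prop :=
  con A x /\ (forall e e', x e -> leq A e' e -> x e').

Definition image (E F : Type) (f : E -> F) (x : E -> Prop) : F -> Prop :=
  fun b => exists a, x a /\ f a = b.

Definition is_map {A B : pre_esp} (f : ev A -> ev B) : Prop :=
  (forall a, pol B (f a) = pol A a) /\
  (forall x, config A x -> config B (image f x)) /\
  (forall x, config A x -> forall a a', x a -> x a' -> f a = f a' -> a = a').

(* A^perp || A : events inl a = (1,a) (in A^perp), inr a = (2,a) (in A). *)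
Definition dpol (A : pre_esp) (c : ev A + ev A) : bool :=
  match c with inl a => negb (pol A a) | inr a => pol A a end.

Definition dle (A : pre_esp) (c c' : ev A + ev A) : Prop :=
  match c, c' with
  | inl a, inl a' => leq A a a'
  | inr a, inr a' => leq A a a'
  | _, _ => False
  end.

Definition dcon (A : pre_esp) (X : ev A + ev A -> Prop) : Prop :=
  Finite X /\ con A (fun a => X (inl a)) /\ con A (fun a => X (inr a)).

Definition bar (E : Type) (c : E + E) : E + E :=
  match c with inl a => inr a | inr a => inl a end.

Definition cc_step (A : pre_esp) (c c' : ev A + ev A) : Prop :=
  dle A c c' \/ (c = bar c' /\ dpol A c' = true).

Definition cc_le (A : pre_esp) : ev A + ev A -> ev A + ev A -> Prop :=
  clos_trans _ (@cc_step A).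

Definition cc_con (A : pre_esp) (X : ev A + ev A -> Prop) : Prop :=
  Finite X /\ dcon A (fun c => exists c', X c' /\ cc_le A c c').

Definition CC (A : pre_esp) : pre_esp :=
  PreEsp (@dpol A) (@cc_le A) (@cc_con A).

Definition CC_map {A B : pre_esp} (f : ev A -> ev B) (c : ev A + ev A)
  : ev B + ev B :=
  match c with inl a => inl (f a) | inr a => inr (f a) end.

(* Pullback squares in ESP:  P --p1--> A --f--> C,  P --p2--> B --g--> C.
   Test objects Q range over (genuine) event structures with polarities. *)
Definition is_pullback {P A B C : pre_esp}
  (p1 : ev P -> ev A) (p2 : ev P -> ev B)
  (f : ev A -> ev C) (g : ev B -> ev C) : Prop :=
  is_map p1 /\ is_map p2 /\ is_map f /\ is_map g /\
  (forall x, f (p1 x) = g (p2 x)) /\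
  forall (Q : esp) (q1 : ev Q -> ev A) (q2 : ev Q -> ev B),
    @is_map Q A q1 -> @is_map Q B q2 -> (forall x, f (q1 x) = g (q2 x)) ->
    exists h : ev Q -> ev P,
      @is_map Q P h /\ (forall x, p1 (h x) = q1 x) /\ (forall x, p2 (h x) = q2 x) /\
      forall h' : ev Q -> ev P,
        @is_map Q P h' -> (forall x, p1 (h' x) = q1 x) -> (forall x, p2 (h' x) = q2 x) ->
        forall x, h' x = h x.

(* A cone q1 : Q -> CC A, q2 : Q -> CC B over CC f and CC g splits Q into two halves,
   according to the side of CC A on which q1 puts an event.  On each half the underlying
   components of q1 and q2 form a cone over f and g, so the pullback P provides maps k_s
   from the half of side s into P, and tagging with the side gives the mediator
   Q -> CC P.  This is a map of esps only if it respects the links from a positive event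
   of CC P to its negative partner, i.e. if k identifies every positive event t with the
   event of Q lying over its partner.  That is again uniqueness in P, applied to the events
   of side s below t, sent to side negb s by taking for each event its copy there.  To
   make this copying monotone, the halves carry only those causal links of Q that q1 or q2
   reflects.  Uniqueness of the mediator is uniqueness in P, half by half. *)

From Stdlib Require Import Relations List Bool Classical ClassicalEpsilon ProofIrrelevance.
Set Implicit Arguments.

Lemma Finite_ext (E : Type) (X Y : E -> Prop) :
  Finite X -> (forall x, X x <-> Y x) -> Finite Y.
Proof. intros [s Hs] HXY. exists s. intro x. rewrite <- HXY. apply Hs. Qed.

Lemma Finite_sub (E : Type) (X Y : E -> Prop) :
  Finite X -> (forall x, Y x -> X x) -> Finite Y.
Proof.
  intros [s Hs] HYX.
  exists (filter (fun x => if excluded_middle_informative (Y x) then true else false) s).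
  intro x. rewrite filter_In, <- Hs.
  destruct (excluded_middle_informative (Y x)) as [Hy|Hy].
  - split; auto.
  - split; [contradiction | intros [_ Hfalse]; discriminate].
Qed.

Lemma Finite_image (E F : Type) (f : E -> F) (X : E -> Prop) :
  Finite X -> Finite (image f X).
Proof.
  intros [s Hs]. exists (map f s). intro y. unfold image. rewrite in_map_iff.
  split; intros [a [Ha Hfa]]; exists a; split; auto; apply Hs; auto.
Qed.

Lemma proj1_sig_inj (T : Type) (S : T -> Prop) (w w' : sig S) :
  proj1_sig w = proj1_sig w' -> w = w'.
Proof. apply eq_sig_hprop. intros; apply proof_irrelevance. Qed.

Section MapProjections.
Variables (X Y : pre_esp) (f : ev X -> ev Y).
Hypothesis Hf : is_map f.

Lemma map_pol a : pol Y (f a) = pol X a.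
Proof. apply Hf. Qed.

Lemma map_config x : config X x -> config Y (image f x).
Proof. apply Hf. Qed.

Lemma map_inj x a a' : config X x -> x a -> x a' -> f a = f a' -> a = a'.
Proof. intro Hx. apply (proj2 (proj2 Hf) x Hx). Qed.
End MapProjections.

Section EspFacts.
Context {X : esp}.

Lemma con_ext (Y Z : ev X -> Prop) :
  con X Y -> (forall x, Y x <-> Z x) -> con X Z.
Proof. intros HY HYZ. apply (con_sub (esp_ax X) Y); auto. intros x Hx; apply HYZ, Hx. Qed.

Lemma config_ext (Y Z : ev X -> Prop) :
  config X Y -> (forall x, Y x <-> Z x) -> config X Z.
Proof.
  intros [HY Hdown] HYZ. split.
  - apply con_ext with Y; auto.
  - intros e e' He Hle. apply HYZ. apply Hdown with e; auto. apply HYZ; auto.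
Qed.

Lemma con_add_below (l : list (ev X)) (Y : ev X -> Prop) :
  con X Y -> (forall z, In z l -> exists y, Y y /\ leq X z y) ->
  con X (fun x => Y x \/ In x l).
Proof.
  induction l as [|a l IH]; intros HY Hl.
  - apply con_ext with Y; auto. simpl. tauto.
  - assert (Hl' : con X (fun x => Y x \/ In x l)).
    { apply IH; auto. intros z Hz; apply Hl; simpl; auto. }
    destruct (Hl a (or_introl eq_refl)) as [y [Hy Hay]].
    apply con_ext with (1 := con_cause (esp_ax X) _ _ _ Hl' (or_introl Hy) Hay).
    intro x. simpl. split; [intros [[H|H]|<-] | intros [H|[<-|H]]]; auto.
Qed.

Definition down (Y : ev X -> Prop) : ev X -> Prop :=
  fun x => exists y, Y y /\ leq X x y.

Lemma down_incl (Y : ev X -> Prop) x : Y x -> down Y x.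
Proof. intro Hx. exists x. split; auto. apply (le_refl (esp_ax X)). Qed.

Lemma Finite_down_list (ys : list (ev X)) :
  Finite (fun x => exists y, In y ys /\ leq X x y).
Proof.
  induction ys as [|y ys [l IH]].
  - exists nil. simpl. firstorder.
  - destruct (down_fin (esp_ax X) y) as [dy Hdy].
    exists (dy ++ l). intro x. rewrite in_app_iff, <- IH, <- Hdy. simpl.
    split.
    + intros [y' [[<-|Hy'] Hle]]; eauto.
    + intros [Hle|[y' [Hy' Hle]]]; eauto.
Qed.

Lemma Finite_down (Y : ev X -> Prop) : Finite Y -> Finite (down Y).
Proof.
  intros [ys Hys]. apply Finite_ext with (1 := Finite_down_list ys).
  intro x. unfold down. split; intros [y [Hy Hle]]; exists y; split; auto; apply Hys; auto.
Qed.

Lemma config_down (Y : ev X -> Prop) : con X Y -> config X (down Y).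
Proof.
  intro HY.
  destruct (Finite_down (con_fin (esp_ax X) _ HY)) as [l Hl].
  split.
  - assert (HYl : con X (fun x => Y x \/ In x l)).
    { apply con_add_below; auto. intros z Hz. apply Hl, Hz. }
    apply (con_sub (esp_ax X) _ _ HYl). intros x Hx. right. apply Hl, Hx.
  - intros e e' [y [Hy Hle]] Hle'. exists y. split; auto.
    apply (le_trans (esp_ax X)) with e; auto.
Qed.

Lemma config_below (e : ev X) : config X (fun x => leq X x e).
Proof.
  apply config_ext with (down (fun x => x = e)).
  - apply config_down, (con_single (esp_ax X)).
  - intro x. unfold down. split.
    + intros [y [-> H]]; auto.
    + intro H; exists e; auto.
Qed.

Section Maps.
Variables (Y : pre_esp) (f : ev X -> ev Y).
Hypothesis Hf : is_map f.

Lemma map_down_lift e b : leq Y b (f e) -> exists e', leq X e' e /\ f e' = b.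
Proof.
  intro Hb. destruct (map_config Hf (config_below e)) as [_ Hdown].
  assert (Hfe : image f (fun x => leq X x e) (f e)).
  { exists e. split; auto. apply (le_refl (esp_ax X)). }
  destruct (Hdown _ _ Hfe Hb) as [e' [He' Hfe']]. eauto.
Qed.

Lemma map_inj_con (Z : ev X -> Prop) e e' :
  con X Z -> Z e -> Z e' -> f e = f e' -> e = e'.
Proof.
  intros HZ He He'. apply (map_inj Hf e e' (config_down _ HZ) (down_incl _ _ He) (down_incl _ _ He')).
Qed.

Lemma map_config_down (Z : ev X -> Prop) :
  con X Z -> config Y (image f (down Z)).
Proof. intro HZ. apply (map_config Hf), config_down, HZ. Qed.
End Maps.
End EspFacts.

Lemma map_comp {X Y Z : esp} (f : ev X -> ev Y) (g : ev Y -> ev Z) :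
  is_map f -> is_map g -> is_map (fun x => g (f x)).
Proof.
  intros Hf Hg. split; [|split].
  - intro a. rewrite (map_pol Hg), (map_pol Hf). reflexivity.
  - intros x Hx. apply config_ext with (image g (image f x)).
    + apply (map_config Hg), (map_config Hf), Hx.
    + intro c. unfold image. split.
      * intros [b [[a [Ha <-]] <-]]. eauto.
      * intros [a [Ha <-]]. exists (f a). split; eauto.
  - intros x Hx a a' Ha Ha' Heq.
    apply (map_inj Hf a a' Hx Ha Ha').
    apply (map_inj Hg (f a) (f a') (map_config Hf Hx)); auto; [exists a | exists a']; auto.
Qed.

Section Sub.
Variables (X : esp) (S : ev X -> Prop) (pl : ev X -> bool).

Definition lift (Y : {x | S x} -> Prop) : ev X -> Prop :=
  fun x => exists H : S x, Y (exist _ x H).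

Definition sub_pre : pre_esp :=
  @PreEsp {x | S x} (fun w => pl (proj1_sig w))
    (fun w w' => leq X (proj1_sig w) (proj1_sig w'))
    (fun Y => con X (lift Y)).

Lemma lift_iff (Y : {x | S x} -> Prop) w : lift Y (proj1_sig w) <-> Y w.
Proof.
  destruct w as [x Hx]. unfold lift. simpl. split.
  - intros [H HY]. rewrite (proof_irrelevance _ Hx H). exact HY.
  - intro HY. exists Hx. exact HY.
Qed.

Lemma Finite_lift (Y : {x | S x} -> Prop) : Finite (lift Y) -> Finite Y.
Proof.
  intros [l Hl].
  enough (Hsig : exists l' : list {x | S x}, forall w, In w l' <-> In (proj1_sig w) l).
  { destruct Hsig as [l' Hl']. exists l'. intro w. rewrite Hl', <- Hl. symmetry. apply lift_iff. }
  clear Hl. induction l as [|a l [l' IH]].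
  - exists nil. simpl. tauto.
  - destruct (classic (S a)) as [Ha|Ha].
    + exists (exist _ a Ha :: l'). intro w. simpl. rewrite IH. split.
      * intros [<-|H]; auto.
      * intros [H|H]; auto. left. apply proj1_sig_inj. auto.
    + exists l'. intro w. simpl. rewrite IH. split; auto.
      intros [H|H]; auto. exfalso. apply Ha. rewrite H. apply proj2_sig.
Qed.

Lemma sub_axioms : esp_axioms sub_pre.
Proof.
  pose proof (esp_ax X) as AX.
  constructor; simpl.
  - intro e. apply (le_refl AX).
  - intros e e' H1 H2. apply proj1_sig_inj, (le_antisym AX); auto.
  - intros e e' e''. apply (le_trans AX).
  - intro e. apply Finite_lift, Finite_sub with (1 := down_fin AX (proj1_sig e)).
    intros x [Hx Hle]. exact Hle.
  - intros Y HY. apply Finite_lift, (con_fin AX _ HY).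
  - apply con_ext with (1 := con_empty AX). intro x. unfold lift. firstorder.
  - intro e. apply con_ext with (1 := con_single AX (proj1_sig e)).
    intro x. unfold lift. split.
    + intros ->. exists (proj2_sig e). destruct e; auto.
    + intros [H <-]. auto.
  - intros Y Z HY HZY. apply (con_sub AX _ _ HY). intros x [H Hx]. exists H; auto.
  - intros Y e e' HY He Hle.
    apply con_ext with (1 := con_cause AX _ _ _ HY (proj2 (lift_iff Y e) He) Hle).
    intro x. unfold lift. split.
    + intros [[Hx HYx] | ->].
      * exists Hx. auto.
      * exists (proj2_sig e'). right. destruct e'; auto.
    + intros [Hx [HYx|<-]].
      * left. exists Hx; auto.
      * right. auto.
Qed.

Definition Sub : esp := Esp sub_axioms.

Lemma Sub_config_con (x : ev Sub -> Prop) : config Sub x -> con X (lift x).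
Proof. intros [H _]. exact H. Qed.
End Sub.

Definition und {E : Type} (c : E + E) : E := match c with inl a => a | inr a => a end.
Definition side {E : Type} (c : E + E) : bool := match c with inl _ => false | inr _ => true end.
Definition tag {E : Type} (s : bool) (a : E) : E + E := if s then inr a else inl a.

Lemma tag_side_und (E : Type) (c : E + E) : tag (side c) (und c) = c.
Proof. destruct c; auto. Qed.
Lemma side_tag (E : Type) s (a : E) : side (tag s a) = s.
Proof. destruct s; auto. Qed.
Lemma und_tag (E : Type) s (a : E) : und (tag s a) = a.
Proof. destruct s; auto. Qed.
Lemma bar_tag (E : Type) s (a : E) : bar (tag s a) = tag (negb s) a.
Proof. destruct s; auto. Qed.
Lemma tag_neq (E : Type) s (c : E + E) : side c <> s -> tag s (und c) = bar c.
Proof. destruct c, s; simpl; intros H; auto; congruence. Qed.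
Lemma bar_bar (E : Type) (c : E + E) : bar (bar c) = c.
Proof. destruct c; auto. Qed.
Lemma side_bar (E : Type) (c : E + E) : side (bar c) = negb (side c).
Proof. destruct c; auto. Qed.
Lemma tag_inj (E : Type) s s' (a a' : E) : tag s a = tag s' a' -> s = s' /\ a = a'.
Proof. destruct s, s'; simpl; intro H; inversion H; auto. Qed.

Lemma und_CC {A B : pre_esp} (f : ev A -> ev B) c : und (CC_map f c) = f (und c).
Proof. destruct c; auto. Qed.
Lemma side_CC {A B : pre_esp} (f : ev A -> ev B) c : side (CC_map f c) = side c.
Proof. destruct c; auto. Qed.
Lemma CC_tag {A B : pre_esp} (f : ev A -> ev B) s a : CC_map f (tag s a) = tag s (f a).
Proof. destruct s; auto. Qed.
Lemma CC_bar {A B : pre_esp} (f : ev A -> ev B) c : CC_map f (bar c) = bar (CC_map f c).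
Proof. destruct c; auto. Qed.
Lemma dpol_bar {A : pre_esp} c : dpol A (bar c) = negb (dpol A c).
Proof. destruct c; simpl; auto. rewrite negb_involutive; auto. Qed.
Lemma dpol_tag {A : pre_esp} s a : dpol A (tag s a) = if s then pol A a else negb (pol A a).
Proof. destruct s; auto. Qed.
Lemma dpol_CC {A B : pre_esp} (f : ev A -> ev B) :
  (forall a, pol B (f a) = pol A a) -> forall c, dpol B (CC_map f c) = dpol A c.
Proof. intros H c. destruct c; simpl; rewrite H; auto. Qed.

Section CCFacts.
Context {X : esp}.

Lemma cc_le_refl c : cc_le X c c.
Proof. apply t_step. left. destruct c; simpl; apply (le_refl (esp_ax X)). Qed.

Lemma cc_le_und c c' : cc_le X c c' -> leq X (und c) (und c').
Proof.
  induction 1 as [c c' [Hdle|[-> _]]| c c' c'' _ IH1 _ IH2].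
  - destruct c, c'; simpl in *; tauto.
  - destruct c'; apply (le_refl (esp_ax X)).
  - apply (le_trans (esp_ax X)) with (und c'); auto.
Qed.

Lemma cc_le_tag s a a' : leq X a a' -> cc_le X (tag s a) (tag s a').
Proof. intro H. apply t_step. left. destruct s; simpl; auto. Qed.

Lemma cc_le_bar c : dpol X c = true -> cc_le X (bar c) c.
Proof. intro H. apply t_step. right. auto. Qed.

Lemma dle_tag_inv c s a : dle X c (tag s a) -> exists a', c = tag s a' /\ leq X a' a.
Proof. destruct c as [a'|a'], s; simpl; intro H; try tauto; exists a'; auto. Qed.

Lemma cc_le_closed (Y : ev X + ev X -> Prop) :
  (forall c c', Y c' -> cc_step X c c' -> Y c) ->
  forall c c', Y c' -> cc_le X c c' -> Y c.
Proof. intros H c c' Hc' Hle. revert Hc'. induction Hle; eauto. Qed.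

Lemma config_cc_side (y : ev X + ev X -> Prop) s :
  config (CC X) y -> config X (fun a => y (tag s a)).
Proof.
  intros [[_ [_ [Hinl Hinr]]] Hdown]. split.
  - assert (Hs : con X (fun a => exists c', y c' /\ cc_le X (tag s a) c')).
    { destruct s; auto. }
    apply (con_sub (esp_ax X) _ _ Hs). intros a Ha. exists (tag s a). split; auto.
    apply cc_le_refl.
  - intros a a' Ha Hle. apply (Hdown (tag s a)); auto. apply cc_le_tag; auto.
Qed.

Lemma config_cc_finite (y : ev X + ev X -> Prop) : config (CC X) y -> Finite y.
Proof. intros [[H _] _]. exact H. Qed.

Lemma config_cc_intro (Y : ev X + ev X -> Prop) :
  Finite Y -> (forall c c', Y c' -> cc_step X c c' -> Y c) ->
  con X (fun a => Y (inl a)) -> con X (fun a => Y (inr a)) ->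
  config (CC X) Y.
Proof.
  intros Hfin Hstep Hinl Hinr.
  assert (Hdown : forall c, (exists c', Y c' /\ cc_le X c c') <-> Y c).
  { intro c. split.
    - intros [c' [Hc' Hle]]. eapply cc_le_closed; eauto.
    - intro Hc. exists c. split; auto. apply cc_le_refl. }
  split.
  - split; auto. split; [|split].
    + apply Finite_ext with Y; auto. intro c. symmetry. apply Hdown.
    + apply con_ext with (1 := Hinl). intro a. symmetry. apply Hdown.
    + apply con_ext with (1 := Hinr). intro a. symmetry. apply Hdown.
  - intros e e' He Hle. eapply cc_le_closed; eauto.
Qed.

Lemma config_cc_sides (Y : ev X + ev X -> Prop) :
  Finite Y -> (forall s, config X (fun a => Y (tag s a))) ->
  (forall c, Y c -> dpol X c = true -> Y (bar c)) ->
  config (CC X) Y.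
Proof.
  intros Hfin Hsides Hbar. apply config_cc_intro; auto.
  - intros c c' Hc' [Hdle|[-> Hpos]]; auto.
    rewrite <- (tag_side_und c') in Hdle, Hc'.
    destruct (dle_tag_inv _ _ _ Hdle) as [a [-> Ha]].
    exact (proj2 (Hsides (side c')) _ _ Hc' Ha).
  - exact (proj1 (Hsides false)).
  - exact (proj1 (Hsides true)).
Qed.
End CCFacts.

Lemma image_CC_map_tag {A B : pre_esp} (f : ev A -> ev B) y s b :
  image (CC_map f) y (tag s b) <-> image f (fun a => y (tag s a)) b.
Proof.
  unfold image. split.
  - intros [c [Hc Heq]]. rewrite <- (tag_side_und c), CC_tag in Heq.
    apply tag_inj in Heq as [<- <-]. exists (und c). rewrite tag_side_und. auto.
  - intros [a [Ha <-]]. exists (tag s a). split; auto. apply CC_tag.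
Qed.

Lemma CC_map_is_map {A B : esp} (f : ev A -> ev B) :
  is_map f -> is_map (A := CC A) (B := CC B) (CC_map f).
Proof.
  intros Hf. split; [|split].
  - apply dpol_CC, (map_pol Hf).
  - intros y Hy. apply config_cc_sides.
    + apply Finite_image, (config_cc_finite Hy).
    + intro s. apply config_ext with (1 := map_config Hf (config_cc_side s Hy)).
      intro b. symmetry. apply image_CC_map_tag.
    + intros c [c0 [Hc0 <-]] Hpos. exists (bar c0). split.
      * apply (proj2 Hy c0); auto. apply cc_le_bar.
        rewrite <- (dpol_CC f (map_pol Hf)). exact Hpos.
      * apply CC_bar.
  - intros y Hy c c' Hc Hc' Heq.
    assert (Hs : side c = side c').
    { rewrite <- (side_CC f c), <- (side_CC f c'), Heq. reflexivity. }
    assert (Hu : f (und c) = f (und c')).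
    { rewrite <- !und_CC, Heq. reflexivity. }
    rewrite <- (tag_side_und c), <- (tag_side_und c'), Hs. f_equal.
    apply (map_inj Hf _ _ (config_cc_side (side c') Hy)); auto.
    + rewrite <- Hs, tag_side_und. exact Hc.
    + rewrite tag_side_und. exact Hc'.
Qed.

Section SideOfCCMap.
Context {Q X : esp} {r : ev Q -> ev X + ev X}.
Hypothesis Hr : is_map (A := Q) (B := CC X) r.
Variables (S : ev Q -> Prop) (s : bool) (pl : ev Q -> bool).
Hypothesis HS : forall e, S e -> side (r e) = s.
Hypothesis HS_down : forall e e', S e -> leq Q e' e -> side (r e') = s -> S e'.
Hypothesis Hpl : forall e, S e -> pl e = pol X (und (r e)).

Let und_r (w : ev (Sub Q S pl)) : ev X := und (r (proj1_sig w)).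

Lemma und_r_tag w : r (proj1_sig w) = tag s (und_r w).
Proof. unfold und_r. rewrite <- (HS (proj2_sig w)). symmetry. apply tag_side_und. Qed.

Lemma Sub_und_config x : config (Sub Q S pl) x -> config X (image und_r x).
Proof.
  intros Hx. pose proof (Sub_config_con Hx) as Hcon.
  split.
  - apply (con_sub (esp_ax X) _ _ (proj1 (config_cc_side s (map_config_down Hr _ Hcon)))).
    intros a [w [Hxw <-]]. exists (proj1_sig w). split.
    + apply down_incl, lift_iff, Hxw.
    + apply und_r_tag.
  - intros a a' [w [Hxw <-]] Hle.
    assert (Hle' : cc_le X (tag s a') (r (proj1_sig w))).
    { rewrite und_r_tag. apply cc_le_tag, Hle. }
    destruct (map_down_lift Hr _ _ Hle') as [e' [Hle'' Hre']].
    assert (HSe' : S e').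
    { apply HS_down with (proj1_sig w); [apply proj2_sig | exact Hle'' |].
      rewrite Hre'. apply side_tag. }
    exists (exist _ e' HSe'). split.
    + apply (proj2 Hx w); auto.
    + unfold und_r. simpl. rewrite Hre'. apply und_tag.
Qed.

Lemma Sub_und_map : is_map (A := Sub Q S pl) (B := X) und_r.
Proof.
  split; [|split].
  - intros [e He]. symmetry. apply Hpl, He.
  - apply Sub_und_config.
  - intros x Hx w w' Hw Hw' Heq. apply proj1_sig_inj.
    apply (map_inj_con Hr (lift Q S x)); auto.
    + apply (Sub_config_con Hx).
    + apply lift_iff, Hw.
    + apply lift_iff, Hw'.
    + rewrite !und_r_tag, Heq. reflexivity.
Qed.
End SideOfCCMap.

Section ConeOverCC.
Context {Q X Y C : esp} {f : ev X -> ev C} {g : ev Y -> ev C}.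
Hypothesis Hf : is_map f.
Variables (rX : ev Q -> ev X + ev X) (rY : ev Q -> ev Y + ev Y).
Hypothesis HrX : is_map (A := Q) (B := CC X) rX.
Hypothesis HrY : is_map (A := Q) (B := CC Y) rY.
Hypothesis Hcomm : forall e, CC_map f (rX e) = CC_map g (rY e).
Context {Z : ev Q -> Prop}.
Hypothesis HZ : config Q Z.

(* The negative partner of [rY pos] has a preimage below [pos]; it is identified with
   [neg] by injectivity of [CC_map f] and [rX] on the configuration [Z]. *)
Lemma cone_bar_transfer_pos pos neg :
  Z pos -> Z neg -> pol Q pos = true -> rX neg = bar (rX pos) -> rY neg = bar (rY pos).
Proof.
  intros Hpos Hneg Hpp Hbar.
  assert (Hle : cc_le Y (bar (rY pos)) (rY pos)).
  { apply cc_le_bar. rewrite <- Hpp. exact (map_pol HrY pos). }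
  destruct (map_down_lift HrY _ _ Hle) as [w [Hw Hrw]].
  assert (Zw : Z w) by exact (proj2 HZ pos w Hpos Hw).
  assert (HrXw : rX w = rX neg).
  { apply (map_inj (CC_map_is_map Hf) _ _ (map_config HrX HZ)).
    - exists w; auto.
    - exists neg; auto.
    - rewrite Hcomm, Hrw, CC_bar, <- Hcomm, <- CC_bar, <- Hbar. reflexivity. }
  rewrite <- (map_inj HrX w neg HZ Zw Hneg HrXw). exact Hrw.
Qed.

Lemma cone_bar_transfer e e' :
  Z e -> Z e' -> rX e' = bar (rX e) -> rY e' = bar (rY e).
Proof.
  intros He He' Hbar. destruct (pol Q e) eqn:Hp.
  - apply cone_bar_transfer_pos; auto.
  - assert (Hp' : pol Q e' = true).
    { pose proof (map_pol HrX e) as Hpe. pose proof (map_pol HrX e') as Hpe'.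
      simpl in Hpe, Hpe'. rewrite <- Hpe', Hbar, dpol_bar, Hpe, Hp. reflexivity. }
    rewrite (cone_bar_transfer_pos He' He Hp').
    + symmetry. apply bar_bar.
    + rewrite Hbar. symmetry. apply bar_bar.
Qed.
End ConeOverCC.

Section CCPullback.
Variables (P A B C : esp) (p1 : ev P -> ev A) (p2 : ev P -> ev B)
  (f : ev A -> ev C) (g : ev B -> ev C).
Hypothesis Hpb : is_pullback p1 p2 f g.

Lemma pb_f_map : is_map f.
Proof. apply Hpb. Qed.

Lemma pb_g_map : is_map g.
Proof. apply Hpb. Qed.

Lemma pb_exists (W : esp) (a : ev W -> ev A) (b : ev W -> ev B) :
  is_map a -> is_map b -> (forall w, f (a w) = g (b w)) ->
  exists h : ev W -> ev P,
    is_map h /\ (forall w, p1 (h w) = a w) /\ (forall w, p2 (h w) = b w).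
Proof.
  intros Ha Hb Hab. destruct Hpb as [_ [_ [_ [_ [_ Hu]]]]].
  destruct (Hu W a b Ha Hb Hab) as [h [Hh [H1 [H2 _]]]]. eauto.
Qed.

Lemma pb_unique (W : esp) (a : ev W -> ev A) (b : ev W -> ev B) :
  is_map a -> is_map b -> (forall w, f (a w) = g (b w)) ->
  forall h h' : ev W -> ev P, is_map h -> is_map h' ->
  (forall w, p1 (h w) = a w) -> (forall w, p2 (h w) = b w) ->
  (forall w, p1 (h' w) = a w) -> (forall w, p2 (h' w) = b w) ->
  forall w, h w = h' w.
Proof.
  intros Ha Hb Hab h h' Hh Hh' H1 H2 H1' H2' w.
  destruct Hpb as [_ [_ [_ [_ [_ Hu]]]]].
  destruct (Hu W a b Ha Hb Hab) as [h0 [_ [_ [_ Hh0]]]].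
  rewrite (Hh0 h), (Hh0 h'); auto.
Qed.

Variable Q : esp.
Variables (q1 : ev Q -> ev A + ev A) (q2 : ev Q -> ev B + ev B).
Hypothesis Hq1 : is_map (A := Q) (B := CC A) q1.
Hypothesis Hq2 : is_map (A := Q) (B := CC B) q2.
Hypothesis Hcomm : forall e, CC_map f (q1 e) = CC_map g (q2 e).

Lemma side_q2 e : side (q2 e) = side (q1 e).
Proof. rewrite <- (side_CC g), <- Hcomm, side_CC. reflexivity. Qed.

Lemma f_und_q1 e : f (und (q1 e)) = g (und (q2 e)).
Proof. rewrite <- !und_CC, Hcomm. reflexivity. Qed.

Lemma pol_und_q2 e : pol B (und (q2 e)) = pol A (und (q1 e)).
Proof. rewrite <- (map_pol pb_f_map), <- (map_pol pb_g_map), f_und_q1. reflexivity. Qed.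

(* Only causal links reflected by q1 or q2 can be transported to the other side of
   [CC A]; see copy_mono. *)
Definition rstep (e e' : ev Q) : Prop :=
  leq Q e e' /\ (cc_le A (q1 e) (q1 e') \/ cc_le B (q2 e) (q2 e')).

Definition rle : ev Q -> ev Q -> Prop := clos_trans _ rstep.

Lemma rle_leq e e' : rle e e' -> leq Q e e'.
Proof.
  induction 1 as [x y [H _]|x y z _ IH1 _ IH2]; auto.
  apply (le_trans (esp_ax Q)) with y; auto.
Qed.

Lemma rle_refl e : rle e e.
Proof. apply t_step. split; [apply (le_refl (esp_ax Q)) | left; apply cc_le_refl]. Qed.

Lemma rle_trans e e' e'' : rle e e' -> rle e' e'' -> rle e e''.
Proof. apply t_trans. Qed.

Lemma Qr_axioms : esp_axioms (PreEsp (pol Q) rle (con Q)).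
Proof.
  pose proof (esp_ax Q) as AX. constructor; simpl.
  - apply rle_refl.
  - intros e e' H1 H2. apply (le_antisym AX); apply rle_leq; auto.
  - apply rle_trans.
  - intro e. apply Finite_sub with (1 := down_fin AX e). intro x; apply rle_leq.
  - apply (con_fin AX).
  - apply (con_empty AX).
  - apply (con_single AX).
  - apply (con_sub AX).
  - intros X e e' HX He Hle. apply (con_cause AX) with e; auto. apply rle_leq, Hle.
Qed.

Definition Qr : esp := Esp Qr_axioms.

Lemma Qr_map (X : esp) (r : ev Q -> ev X + ev X) :
  is_map (A := Q) (B := CC X) r ->
  (forall e' e, leq Q e' e -> cc_le X (r e') (r e) -> rle e' e) ->
  is_map (A := Qr) (B := CC X) r.
Proof.
  intros Hr Hreflect. split; [|split].
  - apply (map_pol Hr).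
  - intros x [Hcon Hdown].
    pose proof (map_config_down Hr _ Hcon) as Hdx.
    apply config_cc_intro.
    + apply Finite_image, (con_fin (esp_ax Q) _ Hcon).
    + intros c c' [e [He <-]] Hstep.
      destruct (map_down_lift Hr e c (t_step _ _ _ _ Hstep)) as [e' [Hle <-]].
      exists e'. split; auto. apply (Hdown e); auto. apply Hreflect; auto. apply t_step, Hstep.
    + apply (con_sub (esp_ax X) _ _ (proj1 (config_cc_side false Hdx))).
      intros a [e [He Heq]]. exists e. split; auto. apply down_incl, He.
    + apply (con_sub (esp_ax X) _ _ (proj1 (config_cc_side true Hdx))).
      intros a [e [He Heq]]. exists e. split; auto. apply down_incl, He.
  - intros x [Hcon _] e e' He He' Heq. apply (map_inj_con Hr x); auto.
Qed.

Lemma q1_Qr_map : is_map (A := Qr) (B := CC A) q1.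
Proof. apply Qr_map; auto. intros e' e Hle Hcc. apply t_step. split; auto. Qed.

Lemma q2_Qr_map : is_map (A := Qr) (B := CC B) q2.
Proof. apply Qr_map; auto. intros e' e Hle Hcc. apply t_step. split; auto. Qed.

Section Copies.
Variable t : ev Q.
Hypothesis Ht : dpol A (q1 t) = true.

Lemma con_below : con Q (fun e => rle e t).
Proof. exact (proj1 (config_below (X := Qr) t)). Qed.

Lemma q1_inj_below e e' : rle e t -> rle e' t -> q1 e = q1 e' -> e = e'.
Proof. intros; apply (map_inj_con q1_Qr_map (fun e => rle e t)); auto. exact con_below. Qed.

Lemma q2_inj_below e e' : rle e t -> rle e' t -> q2 e = q2 e' -> e = e'.
Proof. intros; apply (map_inj_con q2_Qr_map (fun e => rle e t)); auto. exact con_below. Qed.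

Lemma q2_bar_below e e' : rle e t -> rle e' t -> q1 e' = bar (q1 e) -> q2 e' = bar (q2 e).
Proof. apply (cone_bar_transfer pb_f_map q1_Qr_map q2_Qr_map Hcomm (config_below (X := Qr) t)). Qed.

Lemma q1_bar_below e e' : rle e t -> rle e' t -> q2 e' = bar (q2 e) -> q1 e' = bar (q1 e).
Proof.
  apply (cone_bar_transfer pb_g_map q2_Qr_map q1_Qr_map (fun e => eq_sym (Hcomm e))
           (config_below (X := Qr) t)).
Qed.

Definition copy (s : bool) (x x' : ev Q) : Prop :=
  rle x' t /\ q1 x' = tag s (und (q1 x)).

Lemma copy_side s x x' : copy s x x' -> side (q1 x') = s.
Proof. intros [_ H]. rewrite H. apply side_tag. Qed.

Lemma copy_q2 s x x' : rle x t -> copy s x x' -> q2 x' = tag s (und (q2 x)).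
Proof.
  intros Hx [Hx' Hq].
  destruct (bool_dec (side (q1 x)) s) as [Hs|Hs].
  - rewrite <- Hs, tag_side_und in Hq.
    rewrite (q1_inj_below Hx' Hx Hq), <- Hs, <- side_q2, tag_side_und. reflexivity.
  - rewrite tag_neq in Hq; auto.
    rewrite (q2_bar_below Hx Hx' Hq), tag_neq; auto. rewrite side_q2. exact Hs.
Qed.

Lemma copy_step s x y y' : rstep x y -> rle y t -> copy s y y' -> exists x', copy s x x'.
Proof.
  intros [Hle Hcc] Hy Hy'.
  assert (Hx : rle x t) by (apply rle_trans with y; auto; apply t_step; split; auto).
  destruct (bool_dec (side (q1 x)) s) as [Hs|Hs].
  { exists x. split; auto. rewrite <- Hs, tag_side_und. reflexivity. }
  destruct Hcc as [HccA|HccB].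
  - assert (Hle' : cc_le A (tag s (und (q1 x))) (q1 y')).
    { rewrite (proj2 Hy'). apply cc_le_tag, cc_le_und, HccA. }
    destruct (map_down_lift q1_Qr_map _ _ Hle') as [w [Hw Hqw]].
    exists w. split; auto. apply rle_trans with y'; [exact Hw | apply Hy'].
  - assert (Hle' : cc_le B (tag s (und (q2 x))) (q2 y')).
    { rewrite (copy_q2 Hy Hy'). apply cc_le_tag, cc_le_und, HccB. }
    destruct (map_down_lift q2_Qr_map _ _ Hle') as [w [Hw Hqw]].
    assert (Hwt : rle w t) by (apply rle_trans with y'; [exact Hw | apply Hy']).
    exists w. split; auto. rewrite tag_neq; auto.
    apply (q1_bar_below Hx Hwt). rewrite Hqw. apply tag_neq. rewrite side_q2. exact Hs.
Qed.

Lemma copy_exists_below x y : rle x y -> rle y t ->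
  (forall s, exists y', copy s y y') -> forall s, exists x', copy s x x'.
Proof.
  induction 1 as [x y Hxy | x z y _ IH1 Hzy IH2]; intros Hy Hcopies s.
  - destruct (Hcopies s) as [y' Hy']. exact (copy_step Hxy Hy Hy').
  - apply IH1; [apply rle_trans with y; auto | apply IH2; auto].
Qed.

Lemma copy_exists x : rle x t -> forall s, exists x', copy s x x'.
Proof.
  intro Hx. apply copy_exists_below with t; auto using rle_refl.
  intro s. destruct (bool_dec (side (q1 t)) s) as [Hs|Hs].
  - exists t. split; [apply rle_refl |]. rewrite <- Hs, tag_side_und. reflexivity.
  - destruct (map_down_lift q1_Qr_map _ _ (cc_le_bar _ Ht)) as [w [Hw Hqw]].
    exists w. split; auto. rewrite Hqw, tag_neq; auto.
Qed.

Lemma q1_reflects_below e e' : rle e' t -> cc_le A (q1 e) (q1 e') -> rle e t -> rle e e'.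
Proof.
  intros He' Hcc He. destruct (map_down_lift q1_Qr_map _ _ Hcc) as [w [Hw Hqw]].
  rewrite <- (q1_inj_below (rle_trans Hw He') He Hqw). exact Hw.
Qed.

Lemma q2_reflects_below e e' : rle e' t -> cc_le B (q2 e) (q2 e') -> rle e t -> rle e e'.
Proof.
  intros He' Hcc He. destruct (map_down_lift q2_Qr_map _ _ Hcc) as [w [Hw Hqw]].
  rewrite <- (q2_inj_below (rle_trans Hw He') He Hqw). exact Hw.
Qed.

Lemma copy_mono_step s x y x' y' :
  rstep x y -> rle y t -> copy s x x' -> copy s y y' -> rle x' y'.
Proof.
  intros [Hle Hcc] Hy Hx' Hy'.
  assert (Hx : rle x t) by (apply rle_trans with y; auto; apply t_step; split; auto).
  destruct Hcc as [HccA|HccB].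
  - apply q1_reflects_below; [apply Hy' | | apply Hx'].
    rewrite (proj2 Hx'), (proj2 Hy'). apply cc_le_tag, cc_le_und, HccA.
  - apply q2_reflects_below; [apply Hy' | | apply Hx'].
    rewrite (copy_q2 Hx Hx'), (copy_q2 Hy Hy'). apply cc_le_tag, cc_le_und, HccB.
Qed.

Lemma copy_mono x y : rle x y -> rle y t ->
  forall s x' y', copy s x x' -> copy s y y' -> rle x' y'.
Proof.
  induction 1 as [x y Hxy | x z y _ IH1 Hzy IH2]; intros Hy s x' y' Hx' Hy'.
  - exact (copy_mono_step Hxy Hy Hx' Hy').
  - assert (Hz : rle z t) by (apply rle_trans with y; auto).
    destruct (copy_exists Hz s) as [z' Hz'].
    apply rle_trans with z'; [apply (IH1 Hz s) | apply (IH2 Hy s)]; auto.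
Qed.
End Copies.

Definition pol_q1 (e : ev Q) : bool := pol A (und (q1 e)).

Definition Half (s : bool) : esp := Sub Qr (fun e => side (q1 e) = s) pol_q1.

(* The half with the full order of Q: a competing mediator restricts to a map on it. *)
Definition HalfQ (s : bool) : esp := Sub Q (fun e => side (q1 e) = s) pol_q1.

Lemma Half_q1_map s : is_map (A := Half s) (B := A) (fun w => und (q1 (proj1_sig w))).
Proof. apply (Sub_und_map q1_Qr_map _ (s := s)); auto. Qed.

Lemma Half_q2_map s : is_map (A := Half s) (B := B) (fun w => und (q2 (proj1_sig w))).
Proof.
  apply (Sub_und_map q2_Qr_map _ (s := s)).
  - intros e He. rewrite side_q2. exact He.
  - intros e e' _ _ He'. rewrite <- side_q2. exact He'.
  - intros e _. symmetry. apply pol_und_q2.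
Qed.

Lemma HalfQ_q1_map s : is_map (A := HalfQ s) (B := A) (fun w => und (q1 (proj1_sig w))).
Proof. apply (Sub_und_map Hq1 _ (s := s)); auto. Qed.

Lemma HalfQ_q2_map s : is_map (A := HalfQ s) (B := B) (fun w => und (q2 (proj1_sig w))).
Proof.
  apply (Sub_und_map Hq2 _ (s := s)).
  - intros e He. rewrite side_q2. exact He.
  - intros e e' _ _ He'. rewrite <- side_q2. exact He'.
  - intros e _. symmetry. apply pol_und_q2.
Qed.

Lemma HalfQ_Half_map s : is_map (A := HalfQ s) (B := Half s) (fun w => w).
Proof.
  split; [|split].
  - reflexivity.
  - intros y [Hcon Hdown]. apply (@config_ext (Half s) y).
    + split; [exact Hcon |].
      intros w w' Hw Hle. apply (Hdown w); auto. apply rle_leq, Hle.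
    + intro w. unfold image. split; [intro Hw; exists w; auto | intros [w' [Hw' <-]]; auto].
  - auto.
Qed.

Section Coherence.
Local Unset Implicit Arguments.
Variable k : forall s, ev (Half s) -> ev P.
Hypothesis Hk : forall s, is_map (k s).
Hypothesis Hk1 : forall s w, p1 (k s w) = und (q1 (proj1_sig w)).
Hypothesis Hk2 : forall s w, p2 (k s w) = und (q2 (proj1_sig w)).

Section BelowPositive.
Variable t : ev Q.
Hypothesis Ht : dpol A (q1 t) = true.
Variable s : bool.

Definition half_below (e : ev Q) : Prop := rle e t /\ side (q1 e) = s.

Definition HalfBelow : esp := Sub Qr half_below pol_q1.

Definition to_half (w : ev HalfBelow) : ev (Half s) :=
  exist _ (proj1_sig w) (proj2 (proj2_sig w)).

Definition choose_copy e (He : rle e t) : {e' | copy t (negb s) e e'} :=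
  constructive_indefinite_description _ (copy_exists Ht He (negb s)).

Definition to_copy (w : ev HalfBelow) : ev (Half (negb s)) :=
  let c := choose_copy _ (proj1 (proj2_sig w)) in exist _ (proj1_sig c) (copy_side (proj2_sig c)).

Lemma to_copy_spec w : copy t (negb s) (proj1_sig w) (proj1_sig (to_copy w)).
Proof. exact (proj2_sig (choose_copy _ _)). Qed.

Lemma copy_to_copy w : copy t s (proj1_sig (to_copy w)) (proj1_sig w).
Proof.
  destruct (to_copy_spec w) as [_ Hq]. destruct w as [e [He Hs]]. simpl in *.
  split; auto. rewrite Hq, und_tag, <- Hs, tag_side_und. reflexivity.
Qed.

Lemma HalfBelow_q1_map : is_map (A := HalfBelow) (B := A) (fun w => und (q1 (proj1_sig w))).
Proof.
  apply (Sub_und_map q1_Qr_map _ (s := s)).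
  - intros e He. apply He.
  - intros e e' [He _] Hle Hs. split; auto. apply rle_trans with e; auto.
  - reflexivity.
Qed.

Lemma HalfBelow_q2_map : is_map (A := HalfBelow) (B := B) (fun w => und (q2 (proj1_sig w))).
Proof.
  apply (Sub_und_map q2_Qr_map _ (s := s)).
  - intros e He. rewrite side_q2. apply He.
  - intros e e' [He _] Hle Hs. split; [apply rle_trans with e; auto | rewrite <- side_q2; auto].
  - intros e _. symmetry. apply pol_und_q2.
Qed.

Lemma to_half_map : is_map (A := HalfBelow) (B := Half s) to_half.
Proof.
  split; [|split].
  - reflexivity.
  - intros x [Hcon Hdown]. split.
    + apply (con_sub (esp_ax Q) _ _ Hcon).
      intros e [He [w [Hw Heq]]]. apply (f_equal (@proj1_sig _ _)) in Heq. simpl in Heq.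
      subst e. exists (proj2_sig w). destruct w. exact Hw.
    + intros e [e' He'] [w [Hw <-]] Hle. simpl in Hle.
      assert (Hbelow : half_below e').
      { split; auto. apply rle_trans with (proj1_sig w); auto. apply (proj2_sig w). }
      exists (exist _ e' Hbelow). split.
      * apply (Hdown w); auto.
      * apply proj1_sig_inj. reflexivity.
  - intros x _ w w' _ _ Heq. apply proj1_sig_inj.
    apply (f_equal (@proj1_sig _ _)) in Heq. exact Heq.
Qed.

(* An event [e] below [to_copy w] is the copy of the copy [c] of [e] on side [s], and
   [c] lies below [w] by monotonicity of copies. *)
Lemma to_copy_down x : config HalfBelow x ->
  forall w e, x w -> rle (proj1_sig e) (proj1_sig (to_copy w)) ->
  exists w', x w' /\ to_copy w' = e.
Proof.
  intros [_ Hdown] w [e He] Hw Hle. simpl in Hle.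
  pose proof (to_copy_spec w) as [Hcw _].
  assert (Het : rle e t) by (apply rle_trans with (proj1_sig (to_copy w)); auto).
  destruct (copy_exists Ht Het s) as [c Hc].
  assert (Hcw' : rle c (proj1_sig w)) by exact (copy_mono Ht Hle Hcw Hc (copy_to_copy w)).
  assert (Hbelow : half_below c) by (split; [apply Hc | apply (copy_side Hc)]).
  exists (exist _ c Hbelow). split.
  - apply (Hdown w); auto.
  - apply proj1_sig_inj. apply (q1_inj_below (proj1 (to_copy_spec (exist _ c Hbelow))) Het).
    rewrite (proj2 (to_copy_spec _)). simpl. rewrite (proj2 Hc), und_tag.
    simpl in He. rewrite <- He. apply tag_side_und.
Qed.

Lemma to_copy_inj w w' : to_copy w = to_copy w' -> w = w'.
Proof.
  intro Heq. apply (f_equal (@proj1_sig _ _)) in Heq.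
  pose proof (to_copy_spec w) as [_ Hq]. pose proof (to_copy_spec w') as [_ Hq'].
  rewrite Heq, Hq' in Hq. apply tag_inj in Hq as [_ Hu].
  destruct w as [e [He Hs]], w' as [e' [He' Hs']]. apply proj1_sig_inj. simpl in *.
  apply (q1_inj_below He He').
  rewrite <- (tag_side_und (q1 e)), <- (tag_side_und (q1 e')), Hs, Hs', Hu. reflexivity.
Qed.

Lemma to_copy_map : is_map (A := HalfBelow) (B := Half (negb s)) to_copy.
Proof.
  split; [|split].
  - intro w. change (pol_q1 (proj1_sig (to_copy w)) = pol_q1 (proj1_sig w)).
    unfold pol_q1. rewrite (proj2 (to_copy_spec w)), und_tag. reflexivity.
  - intros x Hx. split.
    + apply (con_sub (esp_ax Q) _ _ (con_below t)).
      intros e [He [w [Hw Heq]]].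
      apply (f_equal (@proj1_sig _ _)) in Heq. simpl in Heq. rewrite <- Heq.
      apply (to_copy_spec w).
    + intros e e' [w [Hw <-]] Hle. exact (to_copy_down x Hx w e' Hw Hle).
  - intros x _ w w' _ _. apply to_copy_inj.
Qed.

(* [k s] and [k (negb s)], composed with the two maps out of [HalfBelow], mediate the
   same cone over [f] and [g]. *)
Lemma k_coherent (Hts : side (q1 t) = s) n (Hnt : rle n t) (Hqn : q1 n = bar (q1 t))
  (Hns : side (q1 n) = negb s) :
  k s (exist _ t Hts) = k (negb s) (exist _ n Hns).
Proof.
  assert (Htb : half_below t) by (split; [apply rle_refl | exact Hts]).
  assert (Hagree : forall w, k s (to_half w) = k (negb s) (to_copy w)).
  { apply (pb_unique _ HalfBelow_q1_map HalfBelow_q2_map (fun w => f_und_q1 (proj1_sig w))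
             (map_comp to_half_map (Hk s)) (map_comp to_copy_map (Hk (negb s))));
      intro w; rewrite ?Hk1, ?Hk2; try reflexivity.
    - rewrite (proj2 (to_copy_spec w)), und_tag. reflexivity.
    - rewrite (copy_q2 (proj1 (proj2_sig w)) (to_copy_spec w)), und_tag. reflexivity. }
  transitivity (k s (to_half (exist _ t Htb))).
  { f_equal. apply proj1_sig_inj. reflexivity. }
  rewrite Hagree. f_equal. apply proj1_sig_inj.
  apply (q1_inj_below (proj1 (to_copy_spec (exist _ t Htb))) Hnt).
  rewrite (proj2 (to_copy_spec _)), Hqn. apply tag_neq. simpl. rewrite Hts.
  intro Hs. exact (no_fixpoint_negb s (eq_sym Hs)).
Qed.
End BelowPositive.

Definition mediator (e : ev Q) : ev P + ev P :=
  tag (side (q1 e)) (k (side (q1 e)) (exist (fun x => side (q1 x) = side (q1 e)) e eq_refl)).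

Lemma mediator_eq s e (Hs : side (q1 e) = s) : mediator e = tag s (k s (exist _ e Hs)).
Proof. destruct Hs. reflexivity. Qed.

Lemma CC_p1_mediator e : CC_map p1 (mediator e) = q1 e.
Proof. unfold mediator. rewrite CC_tag, Hk1. apply tag_side_und. Qed.

Lemma CC_p2_mediator e : CC_map p2 (mediator e) = q2 e.
Proof. unfold mediator. rewrite CC_tag, Hk2. simpl. rewrite <- side_q2. apply tag_side_und. Qed.

Lemma dpol_mediator e : dpol P (mediator e) = pol Q e.
Proof.
  unfold mediator. rewrite dpol_tag, (map_pol (Hk _)).
  change (pol (Half _) _) with (pol A (und (q1 e))).
  rewrite <- (map_pol Hq1 e). simpl. destruct (q1 e); reflexivity.
Qed.

Lemma Half_config z s : config Q z -> config (Half s) (fun w => z (proj1_sig w)).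
Proof.
  intros [Hcon Hdown]. split.
  - apply (con_sub (esp_ax Q) _ _ Hcon). intros e [Hs He]. exact He.
  - intros w w' Hw Hle. apply (Hdown (proj1_sig w)); auto. apply rle_leq, Hle.
Qed.

Lemma image_mediator_tag z s r :
  image mediator z (tag s r) <-> image (k s) (fun w => z (proj1_sig w)) r.
Proof.
  split.
  - intros [e [He Heq]].
    assert (Hs : side (q1 e) = s).
    { rewrite <- CC_p1_mediator, side_CC, Heq. apply side_tag. }
    rewrite (mediator_eq s e Hs) in Heq. apply tag_inj in Heq as [_ <-].
    exists (exist _ e Hs). auto.
  - intros [[e Hs] [He <-]]. exists e. split; auto. apply mediator_eq.
Qed.

Lemma mediator_bar z e : config Q z -> z e -> dpol P (mediator e) = true ->
  image mediator z (bar (mediator e)).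
Proof.
  intros Hz He Hpos. rewrite dpol_mediator in Hpos.
  assert (Hp : dpol A (q1 e) = true) by (rewrite <- Hpos; exact (map_pol Hq1 e)).
  destruct (map_down_lift Hq1 _ _ (cc_le_bar _ Hp)) as [n [Hne Hqn]].
  assert (Hn : rle n e).
  { apply t_step. split; auto. left. rewrite Hqn. exact (cc_le_bar _ Hp). }
  assert (Hns : side (q1 n) = negb (side (q1 e))) by (rewrite Hqn; apply side_bar).
  exists n. split; [exact (proj2 Hz e n He Hne) |].
  rewrite (mediator_eq _ n Hns). unfold mediator. rewrite bar_tag. f_equal. symmetry.
  exact (k_coherent e Hp (side (q1 e)) eq_refl n Hn Hqn Hns).
Qed.

Lemma mediator_map : is_map (A := Q) (B := CC P) mediator.
Proof.
  split; [|split].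
  - apply dpol_mediator.
  - intros z Hz. apply config_cc_sides.
    + apply Finite_image, (con_fin (esp_ax Q) _ (proj1 Hz)).
    + intro s. apply config_ext with (1 := map_config (Hk s) (Half_config z s Hz)).
      intro r. symmetry. apply image_mediator_tag.
    + intros c [e [He <-]]. apply mediator_bar; auto.
  - intros z Hz e e' He He' Heq. apply (map_inj Hq1 e e' Hz He He').
    rewrite <- !CC_p1_mediator, Heq. reflexivity.
Qed.

Lemma mediator_unique (h : ev Q -> ev P + ev P) :
  is_map (A := Q) (B := CC P) h ->
  (forall e, CC_map p1 (h e) = q1 e) -> (forall e, CC_map p2 (h e) = q2 e) ->
  forall e, h e = mediator e.
Proof.
  intros Hh H1 H2 e.
  assert (Hside : forall e, side (h e) = side (q1 e)).
  { intro e'. rewrite <- (side_CC p1), H1. reflexivity. }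
  set (s := side (q1 e)).
  assert (Hund : is_map (A := HalfQ s) (B := P) (fun w => und (h (proj1_sig w)))).
  { apply (Sub_und_map Hh _ (s := s)).
    - intros e' He'. rewrite Hside. exact He'.
    - intros e' e'' _ _ He''. rewrite <- Hside. exact He''.
    - intros e' _. unfold pol_q1. rewrite <- (map_pol (proj1 Hpb)), <- und_CC, H1.
      reflexivity. }
  assert (Hagree : forall w : ev (HalfQ s), und (h (proj1_sig w)) = k s w).
  { apply (pb_unique _ (HalfQ_q1_map s) (HalfQ_q2_map s) (fun w => f_und_q1 (proj1_sig w))
             Hund (map_comp (HalfQ_Half_map s) (Hk s))).
    - intro w. rewrite <- und_CC, H1. reflexivity.
    - intro w. rewrite <- und_CC, H2. reflexivity.
    - apply Hk1.
    - apply Hk2. }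
  rewrite <- (tag_side_und (h e)), Hside.
  exact (f_equal (tag s) (Hagree (exist _ e eq_refl))).
Qed.
End Coherence.

Lemma half_mediators_exist : exists k : forall s, ev (Half s) -> ev P,
  (forall s, is_map (k s)) /\ (forall s w, p1 (k s w) = und (q1 (proj1_sig w))) /\
  (forall s w, p2 (k s w) = und (q2 (proj1_sig w))).
Proof.
  destruct (pb_exists _ (Half_q1_map true) (Half_q2_map true) (fun w => f_und_q1 (proj1_sig w)))
    as [kT [HkT [HkT1 HkT2]]].
  destruct (pb_exists _ (Half_q1_map false) (Half_q2_map false) (fun w => f_und_q1 (proj1_sig w)))
    as [kF [HkF [HkF1 HkF2]]].
  exists (fun s : bool => if s as b return ev (Half b) -> ev P then kT else kF).
  split; [|split]; intros []; auto.
Qed.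

Lemma CC_cone_mediator : exists h : ev Q -> ev P + ev P,
  is_map (A := Q) (B := CC P) h /\ (forall e, CC_map p1 (h e) = q1 e) /\
  (forall e, CC_map p2 (h e) = q2 e) /\
  forall h', is_map (A := Q) (B := CC P) h' -> (forall e, CC_map p1 (h' e) = q1 e) ->
    (forall e, CC_map p2 (h' e) = q2 e) -> forall e, h' e = h e.
Proof.
  destruct half_mediators_exist as [k [Hk [Hk1 Hk2]]].
  exists (mediator k). split; [|split; [|split]].
  - apply mediator_map; auto.
  - apply CC_p1_mediator; auto.
  - apply CC_p2_mediator; auto.
  - intros h' Hh' H1 H2. apply mediator_unique; auto.
Qed.
End CCPullback.

Theorem mainTheorem7 (P A B C : esp)
  (p1 : ev P -> ev A) (p2 : ev P -> ev B)
  (f : ev A -> ev C) (g : ev B -> ev C) :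
  @is_pullback P A B C p1 p2 f g ->
  @is_pullback (CC P) (CC A) (CC B) (CC C)
    (@CC_map P A p1) (@CC_map P B p2) (@CC_map A C f) (@CC_map B C g).
Proof.
  intro Hpb. pose proof Hpb as [Hp1 [Hp2 [Hf [Hg [Hsq _]]]]].
  refine (conj (CC_map_is_map Hp1) (conj (CC_map_is_map Hp2)
            (conj (CC_map_is_map Hf) (conj (CC_map_is_map Hg) (conj _ _))))).
  - intros [a|a]; simpl; rewrite Hsq; reflexivity.
  - intros Q q1 q2 Hq1 Hq2 Hcomm. exact (CC_cone_mediator _ _ _ _ Hpb _ Hq1 Hq2 Hcomm).
Qed.
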